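(* In any finite ELP, for any policy $\pi$, $Q^*$ is an optimal solution of the problem: maximize $\mathbb E_\pi[Q(S_T,A_T)]$ over $Q\in\mathcal Q$ subject to $Q(s,a)\le\mathcal BQ(s,a)$ for all $(s,a)$. Equivalently, $Q^*\in\arg\max_{Q\in\mathcal Q}\min_{\lambda\ge0}\mathcal L_\pi(Q,\lambda)$.
   Context: A finite ELP is $(\mathcal S,\mathcal A,P,R,\rho)$ with finite $\mathcal S,\mathcal A$, reward $R:\mathcal S\to\mathbb R$, transitions $P(s'|s,a)$, distribution $\rho$, and nonempty terminal set $\mathcal S_\bot$. Under a policy $\pi$, $S_0$ is a fixed terminal state, $A_t\sim\pi(\cdot|S_t)$, $S_{t+1}\sim P(\cdot|S_t,A_t)$, and $T=\inf\{t\ge1:S_t\in\mathcal S_\bot\}$. ELP conditions: $\mathbb E_\pi[T]<\infty$ for every $\pi$; $P(s'|s,a)=\rho(s')$ for all $s\in\mathcal S_\bot$, all $a,s'$; every state is reachable under some policy. $\mathcal Q$ = all functions $\mathcal S\times\mathcal A\to\mathbb R$; $\lambda\ge0$ ranges over functions $\mathcal S\times\mathcal A\to[0,\infty)$. $\mathcal BQ(s,a)=\sum_{s'}P(s'|s,a)\big(R(s')+\mathbf 1[s'\notin\mathcal S_\bot]\max_{a'}Q(s',a')\big)$, with unique fixed point $Q^*$. $\mathcal L_\pi(Q,\lambda)=\mathbb E_\pi[Q(S_T,A_T)]+\sum_{s,a}\lambda(s,a)(\mathcal BQ(s,a)-Q(s,a))$ with $A_T\sim\pi(\cdot|S_T)$.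 *)

From HB Require Import structures.
From mathcomp Require Import all_boot all_order all_algebra.
From mathcomp Require Import all_classical all_reals all_analysis.
Set Implicit Arguments. Unset Strict Implicit. Unset Printing Implicit Defensive.
Import Order.TTheory GRing.Theory Num.Theory.
Import numFieldNormedType.Exports.
Local Open Scope ring_scope.
Local Open Scope classical_set_scope.

Section ELP.
Variables (R : realType) (S A : finType).

(* P s a s' = P(s' | s, a);  rho s' ;  Rw : S -> R the reward;
   Sbot the terminal set; s0 the fixed terminal initial state S_0. *)

Definition is_distr (T : finType) (d : T -> R) :=
  (forall x, 0 <= d x) /\ \sum_(x : T) d x = 1.

Definition is_kernel (P : S -> A -> S -> R) :=
  forall s a, is_distr (P s a).

Definition is_policy (pi : S -> A -> R) := forall s, is_distr (pi s).

Definition stepK (P : S -> A -> S -> R) (pi : S -> A -> R) (s s' : S) : R :=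
  \sum_(a : A) pi s a * P s a s'.

(* state distribution of the (never stopped) process: dist t s = P_pi(S_t = s) *)
Fixpoint dist (P : S -> A -> S -> R) (pi : S -> A -> R) (s0 : S) (t : nat) (s' : S)
  : R :=
  match t with
  | 0 => if s' == s0 then 1 else 0
  | t.+1 => \sum_(s : S) dist P pi s0 t s * stepK P pi s s'
  end.

(* alive t s = P_pi(S_{t+1} = s, T >= t+1), where T = inf{t >= 1 : S_t in Sbot} *)
Fixpoint alive (Sbot : {set S}) (P : S -> A -> S -> R) (pi : S -> A -> R) (s0 : S)
  (t : nat) (s' : S) : R :=
  match t with
  | 0 => stepK P pi s0 s'
  | t.+1 => \sum_(s : S | s \notin Sbot) alive Sbot P pi s0 t s * stepK P pi s s'
  end.

(* E_pi[T] = sum_{t >= 1} P(T >= t), as an extended real *)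
Definition expected_T (Sbot : {set S}) P pi s0 : \bar R :=
  (\sum_(t <oo) (\sum_(s : S) alive Sbot P pi s0 t s)%:E)%E.

Definition reachable P pi s0 (s : S) := exists t, 0 < dist P pi s0 t s.

Definition is_ELP (Sbot : {set S}) (P : S -> A -> S -> R) (rho : S -> R) (s0 : S) :=
  is_kernel P /\ is_distr rho /\ Sbot != finset.set0 /\ s0 \in Sbot /\
  (forall pi, is_policy pi -> (expected_T Sbot P pi s0 < +oo)%E) /\
  (forall s a s', s \in Sbot -> P s a s' = rho s') /\
  (forall s, exists pi, is_policy pi /\ reachable P pi s0 s).

Definition maxQ (Q : S -> A -> R) (s : S) : R :=
  fine (\big[Order.max/-oo%E]_(a : A) (Q s a)%:E).

Definition bellman (Sbot : {set S}) (P : S -> A -> S -> R) (Rw : S -> R) (Q : S -> A -> R)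
  (s : S) (a : A) : R :=
  \sum_(s' : S) P s a s' * (Rw s' + (if s' \notin Sbot then maxQ Q s' else 0)).

(* E_pi[Q(S_T, A_T)], A_T ~ pi(.|S_T) *)
Definition expected_QT (Sbot : {set S}) P pi s0 (Q : S -> A -> R) : R :=
  let u : R^nat := fun t : nat =>
    \sum_(s : S | s \in Sbot) alive Sbot P pi s0 t s * \sum_(a : A) pi s a * Q s a in
  limn (series u).

Definition lagrangian Sbot P Rw pi s0 (Q lam : S -> A -> R) : R :=
  expected_QT Sbot P pi s0 Q +
  \sum_(s : S) \sum_(a : A) lam s a * (bellman Sbot P Rw Q s a - Q s a).

Definition dual_fun Sbot P Rw pi s0 (Q : S -> A -> R) : \bar R :=
  ereal_inf [set (lagrangian Sbot P Rw pi s0 Q lam)%:E |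
              lam in [set lam : S -> A -> R | forall s a, 0 <= lam s a]].

End ELP.

From HB Require Import structures.
From mathcomp Require Import all_boot all_order all_algebra.
From mathcomp Require Import all_classical all_reals all_analysis.
From mathcomp Require Import lra.
Set Implicit Arguments. Unset Strict Implicit. Unset Printing Implicit Defensive.
Import Order.TTheory GRing.Theory Num.Theory.
Import numFieldNormedType.Exports.
Local Open Scope ring_scope.

(* If Q <= BQ and Q* = BQ*, then on every state Q - Q* is bounded by the
   expected gap Q - Q* at the next non-terminal state, evaluated at the
   greedy actions of Q.  So this greedy gap is subharmonic for the greedy
   deterministic policy, and since episodes have finite expected length under
   that policy, its expectation after a restart from rho is nonpositive.
   Every terminal state restarts from rho, hence Q <= Q* on terminal states,
   which is all E_pi[Q(S_T,A_T)] sees.  For the saddle-point form: the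
   Lagrangian of Q* does not depend on lambda, that of a feasible Q at
   lambda = 0 is E_pi[Q(S_T,A_T)], and that of an infeasible Q is unbounded
   below. *)

Lemma finite_bounded (R : realType) (T : finType) (g : T -> R) :
  exists2 K, 0 <= K & forall x, `|g x| <= K.
Proof.
exists (\sum_x `|g x|); first exact: sumr_ge0.
by move=> x; rewrite (bigD1 x) //= lerDl sumr_ge0.
Qed.

Lemma ler_norm_sum_weighted (R : realType) (T : finType) (p : pred T)
    (w f : T -> R) (K : R) :
  (forall x, 0 <= w x) -> (forall x, `|f x| <= K) ->
  `|\sum_(x | p x) w x * f x| <= K * \sum_x w x.
Proof.
move=> w_ge0 fK; apply: le_trans (ler_norm_sum _ _ _) _.
apply: (@le_trans _ _ (\sum_(x | p x) w x * K)).
  by apply: ler_sum => x _; rewrite normrM ger0_norm // ler_wpM2l.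
rewrite mulr_sumr big_mkcond /=; apply: ler_sum => x _.
have K_ge0 := le_trans (normr_ge0 _) (fK x).
by case: ifP => _; rewrite mulrC // mulr_ge0.
Qed.

Lemma is_cvg_series_dominated (R : realType) (u w : R^nat) (K : R) :
  0 <= K -> (forall n, 0 <= w n) -> cvgn (series w) ->
  (forall n, `|u n| <= K * w n) -> cvgn (series u).
Proof.
move=> K_ge0 w_ge0 cw uw; apply: normed_cvg.
apply: (@series_le_cvg _ _ (K *: w)) => // [n|n|]; first exact: normr_ge0.
  exact: mulr_ge0.
exact: is_cvg_seriesZ.
Qed.

Lemma nondecreasing_dominated_le0 (R : realType) (v w : R^nat) (K : R) :
  (forall n, v n <= v n.+1) -> (forall n, v n <= K * w n) ->
  (w @ \oo --> 0)%classic -> v 0%N <= 0.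
Proof.
move=> v_incr vw w0.
have v0_le n : v 0%N <= K * w n.
  apply: le_trans (vw n); elim: n => // n IH; exact: le_trans (v_incr n).
have Kw0 : ((fun n => K * w n) @ \oo --> 0)%classic.
  by rewrite -(mulr0 K); apply: cvgMl_tmp.
rewrite -(cvg_lim _ Kw0) //; apply: limr_ge; first exact: cvgP Kw0.
exact: nearW.
Qed.

Section Process.
Variables (R : realType) (S A : finType).
Variables (Sbot : {set S}) (P : S -> A -> S -> R) (s0 : S).
Hypothesis P_ge0 : forall s a s', 0 <= P s a s'.

Section Policy.
Variable pi : S -> A -> R.
Hypothesis pi_ge0 : forall s a, 0 <= pi s a.

Lemma stepK_ge0 s s' : 0 <= stepK P pi s s'.
Proof. by apply: sumr_ge0 => a _; apply: mulr_ge0. Qed.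

Lemma alive_ge0 t s : 0 <= alive Sbot P pi s0 t s.
Proof.
elim: t s => [|t IH] s /=; first exact: stepK_ge0.
by apply: sumr_ge0 => x _; rewrite mulr_ge0 ?stepK_ge0.
Qed.

Hypothesis ET_fin : (expected_T Sbot P pi s0 < +oo)%E.

Lemma is_cvg_series_alive :
  cvgn (series (fun t => \sum_s alive Sbot P pi s0 t s)).
Proof.
have w_ge0 t : 0 <= \sum_s alive Sbot P pi s0 t s.
  by apply: sumr_ge0 => s _; exact: alive_ge0.
have ET_ge0 : (0 <= expected_T Sbot P pi s0)%E.
  by apply: nneseries_ge0 => n _ _; rewrite lee_fin.
apply: nondecreasing_is_cvgn; first exact: nondecreasing_series.
exists (fine (expected_T Sbot P pi s0)) => _ [n _ <-].
rewrite -lee_fin fineK ?ge0_fin_numE // /series /= -sumEFin.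
by apply: nneseries_lim_ge => k _; rewrite lee_fin.
Qed.

Lemma is_cvg_series_alive_weighted (p : pred S) (g : S -> R) :
  cvgn (series (fun t => \sum_(s | p s) alive Sbot P pi s0 t s * g s)).
Proof.
have [K K_ge0 gK] := finite_bounded g.
apply: (is_cvg_series_dominated K_ge0 _ is_cvg_series_alive) => t.
  by apply: sumr_ge0 => s _; exact: alive_ge0.
by apply: ler_norm_sum_weighted => // s; exact: alive_ge0.
Qed.

Lemma le_expected_QT (Q Q' : S -> A -> R) :
  (forall s, s \in Sbot -> \sum_a pi s a * Q s a <= \sum_a pi s a * Q' s a) ->
  expected_QT Sbot P pi s0 Q <= expected_QT Sbot P pi s0 Q'.
Proof.
move=> QQ'; apply: lim_series_le; try exact: is_cvg_series_alive_weighted.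
by move=> n; apply: ler_sum => s Ss; rewrite ler_wpM2l ?alive_ge0 ?QQ'.
Qed.

Lemma transient_subharmonic_le0 (m : S -> R) :
  (forall s, s \notin Sbot ->
     m s <= \sum_(s' | s' \notin Sbot) stepK P pi s s' * m s') ->
  \sum_(s | s \notin Sbot) stepK P pi s0 s * m s <= 0.
Proof.
move=> m_sub; have [K K_ge0 mK] := finite_bounded m.
pose v t := \sum_(s | s \notin Sbot) alive Sbot P pi s0 t s * m s.
pose w t := \sum_s alive Sbot P pi s0 t s.
(* v is nondecreasing by subharmonicity, while |v t| <= K P(T > t), which
   tends to 0 because E[T] is finite. *)
apply: (@nondecreasing_dominated_le0 _ v w K).
- move=> t; rewrite /v /=.
  under [X in _ <= X]eq_bigr do rewrite mulr_suml.
  rewrite exchange_big /=; apply: ler_sum => s Ss.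
  under eq_bigr do rewrite -mulrA.
  by rewrite -mulr_sumr ler_wpM2l ?alive_ge0 ?m_sub.
- move=> t; apply: le_trans (ler_norm _) _.
  by apply: ler_norm_sum_weighted => // s; exact: alive_ge0.
- exact: cvg_series_cvg_0 is_cvg_series_alive.
Qed.

End Policy.
End Process.

Section Bellman.
Variables (R : realType) (S A : finType).

Definition greedy (a0 : A) (Q : S -> A -> R) (s : S) : A :=
  [arg max_(a > a0) Q s a]%O.

Lemma maxQ_greedy (a0 : A) (Q : S -> A -> R) s :
  maxQ Q s = Q s (greedy a0 Q s).
Proof.
rewrite /maxQ /greedy; case: arg_maxP => //= b _ Qb.
suff -> : (\big[Order.max/-oo%E]_a (Q s a)%:E = (Q s b)%:E)%E by [].
apply/eqP; rewrite eq_le le_bigmax ?andbT //.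
by apply: bigmax_le => [|a _]; rewrite ?leNye ?lee_fin ?Qb.
Qed.

Lemma le_maxQ (Q : S -> A -> R) s a : Q s a <= maxQ Q s.
Proof. by rewrite (maxQ_greedy a) /greedy; case: arg_maxP => //= b _; apply. Qed.

Definition det_policy (f : S -> A) : S -> A -> R := fun s a => (a == f s)%:R.

Lemma det_policy_is_policy f : is_policy (det_policy f).
Proof.
move=> s; split=> [a|]; first exact: ler0n.
by rewrite (bigD1 (f s)) //= /det_policy eqxx big1 ?addr0 // => a /negbTE ->.
Qed.

Lemma stepK_det_policy (P : S -> A -> S -> R) f s s' :
  stepK P (det_policy f) s s' = P s (f s) s'.
Proof.
rewrite /stepK (bigD1 (f s)) //= /det_policy eqxx mul1r big1 ?addr0 //.
by move=> a /negbTE ->; rewrite mul0r.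
Qed.

Lemma bellman_sub_le Sbot (P : S -> A -> S -> R) Rw a0 (Q Q' : S -> A -> R) s a :
  (forall s', 0 <= P s a s') ->
  bellman Sbot P Rw Q s a - bellman Sbot P Rw Q' s a <=
  \sum_(s' | s' \notin Sbot) P s a s' *
    (Q s' (greedy a0 Q s') - Q' s' (greedy a0 Q s')).
Proof.
move=> P_ge0; rewrite /bellman -sumrB [X in _ <= X]big_mkcond /=.
apply: ler_sum => s' _; rewrite -mulrBr; case: ifP => _; last first.
  by rewrite subrr mulr0.
rewrite ler_wpM2l // opprD addrACA subrr add0r (maxQ_greedy a0 Q).
by rewrite lerB ?le_maxQ.
Qed.

End Bellman.

Arguments det_policy {R S A} f s a.
Arguments det_policy_is_policy {R S A} f.

Section ELP.
Variables (R : realType) (S A : finType).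
Variables (Sbot : {set S}) (P : S -> A -> S -> R) (rho : S -> R) (s0 : S).
Variables (Rw : S -> R) (Qstar : S -> A -> R).
Hypothesis ELP : is_ELP Sbot P rho s0.
Hypothesis Qstar_fixed : forall s a, bellman Sbot P Rw Qstar s a = Qstar s a.

Let P_ge0 s a s' : 0 <= P s a s'.
Proof. by case: ELP => kP _; case: (kP s a). Qed.

Lemma feasible_le_fixpoint_terminal (Q : S -> A -> R) s a :
  (forall s a, Q s a <= bellman Sbot P Rw Q s a) ->
  s \in Sbot -> Q s a <= Qstar s a.
Proof.
case: ELP => _ [_ [_ [s0_bot [ET_fin [P_term _]]]]] Q_feas s_bot.
pose g := greedy a Q; pose gap s := Q s (g s) - Qstar s (g s).
have gap_le s' a' :
    Q s' a' - Qstar s' a' <= \sum_(s'' | s'' \notin Sbot) P s' a' s'' * gap s''.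
  rewrite -Qstar_fixed; apply: le_trans (bellman_sub_le _ _ a _ _ (P_ge0 s' a')).
  by rewrite lerB.
have rho_gap_le0 : \sum_(s' | s' \notin Sbot) rho s' * gap s' <= 0.
  have g_pol := det_policy_is_policy (R := R) g.
  rewrite (eq_bigr (fun s' => stepK P (det_policy g) s0 s' * gap s')) => [|s' _].
    apply: (transient_subharmonic_le0 P_ge0) => [s' a'||s' _].
    - exact: (g_pol s').1.
    - exact: ET_fin.
    by under eq_bigr do rewrite stepK_det_policy; exact: gap_le.
  by rewrite stepK_det_policy P_term.
rewrite -subr_le0; apply: le_trans (gap_le s a) _.
by under eq_bigr do rewrite P_term //.
Qed.

Lemma expected_QT_feasible_le (pi Q : S -> A -> R) :
  is_policy pi -> (forall s a, Q s a <= bellman Sbot P Rw Q s a) ->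
  expected_QT Sbot P pi s0 Q <= expected_QT Sbot P pi s0 Qstar.
Proof.
case: ELP => _ [_ [_ [_ [ET_fin _]]]] pi_pol Q_feas.
apply: (le_expected_QT P_ge0 (fun s => (pi_pol s).1) (ET_fin _ pi_pol)) => s s_bot.
apply: ler_sum => a _; rewrite ler_wpM2l ?(pi_pol s).1 //.
exact: feasible_le_fixpoint_terminal.
Qed.

End ELP.

Section Lagrangian.
Variables (R : realType) (S A : finType).
Variables (Sbot : {set S}) (P : S -> A -> S -> R) (Rw : S -> R).
Variables (pi : S -> A -> R) (s0 : S).

Lemma lagrangian_fixpoint (Q lam : S -> A -> R) :
  (forall s a, bellman Sbot P Rw Q s a = Q s a) ->
  lagrangian Sbot P Rw pi s0 Q lam = expected_QT Sbot P pi s0 Q.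
Proof.
move=> Q_fixed; rewrite /lagrangian big1 ?addr0 // => s _.
by rewrite big1 // => a _; rewrite Q_fixed subrr mulr0.
Qed.

Lemma lagrangian0 (Q : S -> A -> R) :
  lagrangian Sbot P Rw pi s0 Q (fun _ _ => 0) = expected_QT Sbot P pi s0 Q.
Proof.
rewrite /lagrangian big1 ?addr0 // => s _.
by rewrite big1 // => a _; rewrite mul0r.
Qed.

Lemma dual_fun_le_lagrangian (Q lam : S -> A -> R) :
  (forall s a, 0 <= lam s a) ->
  (dual_fun Sbot P Rw pi s0 Q <= (lagrangian Sbot P Rw pi s0 Q lam)%:E)%E.
Proof. by move=> lam_ge0; apply: ereal_inf_lbound; exists lam. Qed.

Lemma fixpoint_le_dual_fun (Q : S -> A -> R) :
  (forall s a, bellman Sbot P Rw Q s a = Q s a) ->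
  ((expected_QT Sbot P pi s0 Q)%:E <= dual_fun Sbot P Rw pi s0 Q)%E.
Proof.
by move=> Q_fixed; apply: le_ereal_inf_tmp => _ [lam _ <-]; rewrite lagrangian_fixpoint.
Qed.

Lemma lagrangian_unbounded_below (Q : S -> A -> R) s1 a1 (y : R) :
  bellman Sbot P Rw Q s1 a1 < Q s1 a1 ->
  exists2 lam : S -> A -> R, (forall s a, 0 <= lam s a) &
    lagrangian Sbot P Rw pi s0 Q lam <= y.
Proof.
rewrite -subr_gt0 => d_gt0.
set d := Q s1 a1 - bellman Sbot P Rw Q s1 a1 in d_gt0.
set E := expected_QT Sbot P pi s0 Q.
pose c := `|E - y| / d.
exists (fun s a => if (s == s1) && (a == a1) then c else 0).
  by move=> s a; case: ifP => // _; rewrite /c divr_ge0 ?normr_ge0 ?ltW.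
rewrite /lagrangian -/E (bigD1 s1) //= (bigD1 a1) //= !eqxx /=.
rewrite big1 => [|a /negbTE ->]; last by rewrite mul0r.
rewrite big1 => [|s /negbTE s_s1]; last first.
  by rewrite big1 // => a _; rewrite s_s1 mul0r.
have -> : c * (bellman Sbot P Rw Q s1 a1 - Q s1 a1) = - `|E - y|.
  by rewrite -opprB -/d mulrN divfK ?gt_eqF.
by have := ler_norm (E - y); lra.
Qed.

End Lagrangian.

Theorem mainTheorem9 (R : realType) (S A : finType)
  (P : S -> A -> S -> R) (Rw : S -> R) (rho : S -> R) (Sbot : {set S}) (s0 : S)
  (Qstar : S -> A -> R) (pi : S -> A -> R) :
  is_ELP Sbot P rho s0 ->
  (forall s a, bellman Sbot P Rw Qstar s a = Qstar s a) ->
  is_policy pi ->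
  [/\ (forall s a, Qstar s a <= bellman Sbot P Rw Qstar s a),
      (forall Q : S -> A -> R, (forall s a, Q s a <= bellman Sbot P Rw Q s a) ->
         expected_QT Sbot P pi s0 Q <= expected_QT Sbot P pi s0 Qstar) &
      (forall Q : S -> A -> R,
         (dual_fun Sbot P Rw pi s0 Q <= dual_fun Sbot P Rw pi s0 Qstar)%E)].
Proof.
move=> ELP Qstar_fixed pi_pol; split=> [s a|Q|Q]; first by rewrite Qstar_fixed.
  exact: (expected_QT_feasible_le ELP Qstar_fixed pi_pol).
apply: le_trans (fixpoint_le_dual_fun pi s0 Qstar_fixed).
suff [lam lam_ge0 lag_le] : exists2 lam : S -> A -> R, (forall s a, 0 <= lam s a) &
    lagrangian Sbot P Rw pi s0 Q lam <= expected_QT Sbot P pi s0 Qstar.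
  by apply: le_trans (dual_fun_le_lagrangian _ _ _ _ _ _ lam_ge0) _.
have [Q_feas|/existsNP [s1 /existsNP [a1 /negP]]] :=
  pselect (forall s a, Q s a <= bellman Sbot P Rw Q s a).
  exists (fun _ _ => 0) => //.
  by rewrite lagrangian0 (expected_QT_feasible_le ELP Qstar_fixed).
by rewrite -ltNge => /lagrangian_unbounded_below; apply.
Qed.
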